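(* Let $F$ and $V=(v_{pq})$ be $n\times n$ real matrices and let $i\in\{1,\dots,n\}$. Suppose that $V_{[i,i]}$ is nonsingular. Consider $v_{ii}\to\infty$ with $F$ and all other entries of $V$ held fixed (so that $V$ is invertible for all sufficiently large $v_{ii}$). Then \[ \lim_{v_{ii}\to\infty}\rho(FV^{-1})=\rho\big(F_{[i,i]}(V_{[i,i]})^{-1}\big). \]
   Context: For a matrix $M$, $M_{[j,k]}$ denotes the matrix obtained from $M$ by deleting its $j$th row and $k$th column; $v_{pq}$ denotes the $(p,q)$ entry of $V$. $\rho(M)$ denotes the spectral radius of a square matrix $M$, i.e. the maximum modulus of its eigenvalues. *)

From HB Require Import structures.
From mathcomp Require Import all_boot all_order all_algebra.
From mathcomp Require Import all_classical all_reals all_analysis.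
From mathcomp Require Import complex.
Set Implicit Arguments. Unset Strict Implicit. Unset Printing Implicit Defensive.
Import Order.TTheory GRing.Theory Num.Theory.
Local Open Scope ring_scope.
Local Open Scope classical_set_scope.

(* Complex eigenvalues of a real square matrix: eigenvalues of its image in
   the complex numbers R[i]. *)
Definition cplx_mx (R : realType) (n : nat) (M : 'M[R]_n) : 'M[R[i]]_n :=
  map_mx (fun x : R => (x%:C)%C) M.

(* spectral radius: the maximum modulus of the (complex) eigenvalues,
   written as the supremum of this finite set (0 for the empty 0x0 case). *)
Definition spectral_radius (R : realType) (n : nat) (M : 'M[R]_n) : R :=
  sup [set Normc.normc z | z in [set z : R[i] | eigenvalue (cplx_mx M) z]].

Definition set_diag_entry (R : realType) (n : nat) (V : 'M[R]_n) (i : 'I_n) (t : R)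
  : 'M[R]_n := \matrix_(p, q) (if (p == i) && (q == i) then t else V p q).

Definition del_rc (R : realType) (n : nat) (M : 'M[R]_n.+1) (i : 'I_n.+1) : 'M[R]_n :=
  row' i (col' i M).

From HB Require Import structures.
From mathcomp Require Import all_boot all_order all_algebra.
From mathcomp Require Import all_classical all_reals all_analysis.
From mathcomp Require Import complex.
From mathcomp Require Import perm ring.
Set Implicit Arguments. Unset Strict Implicit. Unset Printing Implicit Defensive.
Import numFieldNormedType.Exports.
Import Order.TTheory GRing.Theory Num.Theory.
Local Open Scope ring_scope.
Local Open Scope classical_set_scope.

(* For t := v_ii large, det V = t det V_[i,i] + c and V^-1 = W + (det V)^-1 P
   with P independent of t, where W is (V_[i,i])^-1 with a zero row and column
   inserted at i; hence F V^-1 --> F W. A left eigenvector of F W for a nonzero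
   eigenvalue vanishes at i, so F W and F_[i,i] (V_[i,i])^-1 have the same
   nonzero eigenvalues, hence the same spectral radius. Finally the spectral
   radius is continuous: on bounded sets det (z I - A) is Lipschitz in A, and
   |det (z I - B)| is the product of the distances from z to the eigenvalues of
   B, so every eigenvalue of A is close to one of B when A is close to B. *)

Section DeterminantPerturbation.
Variable C : numDomainType.

Lemma norm_prodB_le m (a b : 'I_m -> C) (K e : C) :
  (forall k, `|a k| <= K) -> (forall k, `|b k| <= K) ->
  (forall k, `|a k - b k| <= e) ->
  `|\prod_k a k - \prod_k b k| <= m%:R * (1 + K) ^+ m * e.
Proof.
elim: m a b => [|m IHm] a b aK bK abe; first by rewrite !big_ord0 subrr normr0 !mul0r.
have K0 : 0 <= K := le_trans (normr_ge0 _) (aK ord_max).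
have e0 : 0 <= e := le_trans (normr_ge0 _) (abe ord_max).
rewrite !big_ord_recr /=.
set A := \prod_(k < m) _; set B := \prod_(k < m) _.
have AB : `|A - B| <= m%:R * (1 + K) ^+ m * e by apply: IHm.
have B1K : `|B| <= (1 + K) ^+ m.
  rewrite normr_prod -[m in _ ^+ m]card_ord -prodr_const.
  by apply: ler_prod => k _; rewrite normr_ge0 (le_trans (bK _)) ?lerDr.
have -> : A * a ord_max - B * b ord_max
    = (A - B) * a ord_max + B * (a ord_max - b ord_max).
  by rewrite mulrBl mulrBr addrA subrK.
apply: le_trans (ler_normD _ _) _; rewrite !normrM.
apply: le_trans (lerD (ler_pM _ _ AB (aK _)) (ler_pM _ _ B1K (abe _))) _ => //.
rewrite -subr_ge0 exprSr -natr1.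
have -> : (m%:R + 1) * ((1 + K) ^+ m * (1 + K)) * e
    - (m%:R * (1 + K) ^+ m * e * K + (1 + K) ^+ m * e)
    = m%:R * (1 + K) ^+ m * e + (1 + K) ^+ m * e * K.
  by ring.
by rewrite addr_ge0 ?mulr_ge0 ?exprn_ge0 ?addr_ge0.
Qed.

Lemma norm_detB_le m (M N : 'M[C]_m) (K e : C) :
  (forall p q, `|M p q| <= K) -> (forall p q, `|N p q| <= K) ->
  (forall p q, `|M p q - N p q| <= e) ->
  `|\det M - \det N| <= m`!%:R * (m%:R * (1 + K) ^+ m * e).
Proof.
move=> MK NK MNe; rewrite /determinant -sumrB.
apply: le_trans (ler_norm_sum _ _ _) _.
rewrite mulr_natl -card_Sn -sumr_const; apply: ler_sum => s _.
rewrite -mulrBr normrM normrX normrN normr1 expr1n mul1r.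
exact: norm_prodB_le.
Qed.

End DeterminantPerturbation.

Lemma norm_eigenvalue_le (C : numFieldType) m (M : 'M[C]_m) (K z : C) :
  (forall p q, `|M p q| <= K) -> eigenvalue M z -> `|z| <= m%:R * K.
Proof.
move=> MK /eigenvalueP[v vM v0].
have v_gt0 : 0 < \sum_k `|v 0 k|.
  rewrite lt_def sumr_ge0 ?andbT //; apply: contra v0 => /eqP/psumr_eq0P v0.
  by apply/eqP/rowP => k; rewrite mxE; apply/normr0_eq0/v0.
rewrite -(ler_pM2r v_gt0) mulr_sumr.
have -> : \sum_k `|z| * `|v 0 k| = \sum_j `|\sum_k v 0 k * M k j|.
  apply: eq_bigr => j _; rewrite -normrM.
  by have := congr1 (fun w : 'rV_m => w 0 j) vM; rewrite !mxE => ->.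
rewrite -[m in m%:R]card_ord -sumr_const !mulr_suml.
apply: ler_sum => j _; apply: le_trans (ler_norm_sum _ _ _) _.
by rewrite mulr_sumr; apply: ler_sum => k _; rewrite normrM mul1r mulrC ler_wpM2r.
Qed.

Lemma horner_char_poly (K : fieldType) m (M : 'M[K]_m) z :
  (char_poly M).[z] = \det (z%:M - M).
Proof.
rewrite -[_.[z]]/(horner_eval z _) -det_map_mx; congr (\det _).
by apply/matrixP => p q; rewrite !mxE /= rmorphB rmorphMn /= !horner_evalE hornerX hornerC.
Qed.

Section ComplexSpectrum.
Variable R : rcfType.
Local Notation normc := (@Normc.normc R).
Local Open Scope complex_scope.

Lemma eigenvalue_near_of_det_lt m (M : 'M[R[i]]_m) (z : R[i]) (eps : R) : 0 <= eps ->
  `|\det (z%:M - M)| < (eps ^+ m)%:C -> exists2 w, eigenvalue M w & normc (z - w) < eps.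
Proof.
move=> eps0; have [r charM] := closed_field_poly_normal (char_poly M).
rewrite (monicP (char_poly_monic M)) scale1r in charM.
have size_r : size r = m.
  by have := size_char_poly M; rewrite charM size_prod_XsubC => -[].
case: (boolP (has (fun x => normc (z - x) < eps) r)) => [/hasP[w wr zw] _|/hasPn far].
  by exists w; rewrite // eigenvalue_root_char charM root_prod_XsubC.
rewrite -horner_char_poly charM horner_prod normr_prod -[m in eps ^+ m]size_r.
move=> /lt_geF/negbT/negP[].
rewrite rmorphXn -iter_mulr_1 -count_predT -big_const_seq /= !big_seq.
apply: ler_prod => x xr; rewrite hornerXsubC ler0c eps0 /=.
by rewrite lecR leNgt far.
Qed.

Lemma eigenvalue_perturbation m (K eps : R) : 0 <= K -> 0 < eps ->
  exists2 eta : R, 0 < eta & forall A B : 'M[R[i]]_m,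
    (forall p q, `|A p q| <= K%:C) -> (forall p q, `|B p q| <= K%:C) ->
    (forall p q, `|A p q - B p q| <= eta%:C) ->
    forall z, eigenvalue A z -> exists2 w, eigenvalue B w & normc (z - w) < eps.
Proof.
(* Eigenvalues of A are bounded by m K, so the entries of z%:M - A and z%:M - B
   are bounded by L, and norm_detB_le makes |det (z%:M - B)| < eps ^+ m. *)
move=> K0 eps0; pose L := m%:R * K + K.
pose c := m`!%:R * (m%:R * (1 + L) ^+ m).
have c0 : 0 <= c by rewrite !mulr_ge0 ?exprn_ge0 ?addr_ge0 ?mulr_ge0.
pose eta := eps ^+ m / (c + 1).
exists eta => [|A B AK BK ABeta z Az].
  by rewrite divr_gt0 ?exprn_gt0 ?ltr_wpDl.
have zmK : `|z| <= (m%:R * K)%:C.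
  by rewrite rmorphM rmorph_nat; exact: norm_eigenvalue_le Az.
have shiftL (N : 'M[R[i]]_m) : (forall p q, `|N p q| <= K%:C) ->
    forall p q, `|(z%:M - N) p q| <= L%:C.
  move=> NK p q; rewrite !mxE rmorphD.
  apply: le_trans (ler_normB _ _) (lerD _ (NK p q)).
  by case: (p == q); rewrite ?mulr1n ?mulr0n ?normr0 ?(le_trans (normr_ge0 z) zmK).
have detA : \det (z%:M - A) = 0.
  by move: Az; rewrite eigenvalue_root_char -horner_char_poly => /rootP.
apply: eigenvalue_near_of_det_lt; first exact: ltW.
have -> : \det (z%:M - B) = - (\det (z%:M - A) - \det (z%:M - B)).
  by rewrite detA sub0r opprK.
rewrite normrN.
apply: le_lt_trans (norm_detB_le (shiftL _ AK) (shiftL _ BK) (e := eta%:C) _) _.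
  by move=> p q; rewrite !mxE opprB [_ - _ + _]addrC subrKA distrC.
have cE (x : R) : m`!%:R * (m%:R * (1 + L%:C) ^+ m * x%:C) = (c * x)%:C.
  by rewrite /c /L !(rmorphM, rmorphXn, rmorphD, rmorph1, rmorph_nat) !mulrA.
rewrite cE ltcR mulrA ltr_pdivrMr ?ltr_wpDl // mulrC ltr_pM2l ?exprn_gt0 //.
by rewrite ltrDl.
Qed.

End ComplexSpectrum.

Lemma norm_mx_entry_le (K : realFieldType) m n (M : 'M[K]_(m, n)) p q :
  `|M p q| <= `|M|.
Proof.
by rewrite [leRHS]/Num.norm /= mx_normrE (le_bigmax _ (fun ij => `|M ij.1 ij.2|) (p, q)).
Qed.

Section SpectralRadius.
Variable R : realType.
Local Notation normc := (@Normc.normc R).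
Local Open Scope complex_scope.

Lemma norm_real_complex (x : R) : `|x%:C| = `|x|%:C.
Proof. by rewrite normc_def /= expr0n addr0 sqrtr_sqr. Qed.

Lemma spectral_radius_ub m (M : 'M[R]_m) z :
  eigenvalue (cplx_mx M) z -> normc z <= spectral_radius M.
Proof.
move=> Mz; apply: ub_le_sup; last by exists z.
exists (m%:R * `|M|) => _ [w Mw <-]; rewrite -lecR rmorphM rmorph_nat.
apply: norm_eigenvalue_le Mw => p q.
by rewrite mxE norm_real_complex lecR norm_mx_entry_le.
Qed.

Lemma spectral_radius_le m (M : 'M[R]_m) b : 0 <= b ->
  (forall z, eigenvalue (cplx_mx M) z -> normc z <= b) -> spectral_radius M <= b.
Proof.
rewrite /spectral_radius; set S := [set _ | _ in _] => b0 Mb.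
have [->|/set0P S0] := eqVneq S set0; first by rewrite sup0.
by apply: ge_sup => // _ [z Mz <-]; exact: Mb.
Qed.

Lemma spectral_radius_ge0 m (M : 'M[R]_m) : 0 <= spectral_radius M.
Proof.
rewrite /spectral_radius; set S := [set _ | _ in _].
have [->|/set0P[_ [z Mz _]]] := eqVneq S set0; first by rewrite sup0.
by apply: le_trans (spectral_radius_ub Mz); rewrite -ler0c; exact: (normr_ge0 z).
Qed.

Lemma spectral_radius_le_add m (A B : 'M[R]_m) eps : 0 <= eps ->
  (forall z, eigenvalue (cplx_mx A) z ->
     exists2 w, eigenvalue (cplx_mx B) w & normc (z - w) <= eps) ->
  spectral_radius A <= spectral_radius B + eps.
Proof.
move=> eps0 AB; apply: spectral_radius_le => [|z /AB[w Bw zw]].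
  by rewrite addr_ge0 ?spectral_radius_ge0.
have := le_normcD w (z - w); rewrite addrC subrK => /le_trans; apply.
exact: lerD (spectral_radius_ub Bw) zw.
Qed.

Lemma spectral_radius_perturbation m (K eps : R) : 0 <= K -> 0 < eps ->
  exists2 eta : R, 0 < eta & forall A B : 'M[R]_m,
    `|A| <= K -> `|B| <= K -> `|A - B| <= eta ->
    spectral_radius A <= spectral_radius B + eps.
Proof.
move=> K0 eps0; have [eta eta0 perturb] := eigenvalue_perturbation m K0 eps0.
exists eta => // A B AK BK ABeta.
have cplx_le (N : 'M[R]_m) k : `|N| <= k -> forall p q, `|cplx_mx N p q| <= k%:C.
  by move=> Nk p q; rewrite mxE norm_real_complex lecR (le_trans (norm_mx_entry_le _ _ _)).
apply: spectral_radius_le_add (ltW eps0) _ => z Az.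
have [p q|w Bw zw] := perturb _ _ (cplx_le _ _ AK) (cplx_le _ _ BK) _ z Az.
  by have := cplx_le _ _ ABeta p q; rewrite !mxE rmorphB.
by exists w => //; exact: ltW.
Qed.

Lemma spectral_radius_continuous m : continuous (@spectral_radius R m).
Proof.
(* The Filter instance on matrix neighbourhoods is not inferred here. *)
move=> M; apply/(@cvgrPdist_le _ _ _ _ (nbhs_filter M)) => eps eps0.
have [eta eta0 rho_le] :=
  spectral_radius_perturbation m (addr_ge0 (normr_ge0 M) ler01) eps0.
have d0 : 0 < Num.min eta 1 by rewrite lt_min eta0 ltr01.
near=> A.
have /andP[/ltW MAeta /ltW MA1] : (`|M - A| < eta) && (`|M - A| < 1).
  by rewrite -lt_min; near: A; apply: cvgr_dist_lt => //; exact: cvg_id.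
have M_le : `|M| <= `|M| + 1 by rewrite lerDl.
have A_le : `|A| <= `|M| + 1.
  rewrite -{1}[A](subKr M); apply: le_trans (ler_normB _ _) _.
  by rewrite lerD2l.
by rewrite ler_distl lerBlDr; apply/andP; split; apply: rho_le; rewrite // distrC.
Unshelve. all: by end_near.
Qed.

End SpectralRadius.

Section PadRowCol.
Variables (K : pzRingType) (n : nat) (i : 'I_n.+1).

Definition pad_rc (X : 'M[K]_n) : 'M[K]_n.+1 :=
  \matrix_(p, q) match unlift i p, unlift i q with
                 | Some a, Some b => X a b | _, _ => 0 end.

Lemma pad_rc_lift X a b : pad_rc X (lift i a) (lift i b) = X a b.
Proof. by rewrite mxE !liftK. Qed.

Lemma pad_rc_row X q : pad_rc X i q = 0.
Proof. by rewrite mxE unlift_none. Qed.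

Lemma pad_rc_col X p : pad_rc X p i = 0.
Proof. by rewrite mxE unlift_none; case: unlift. Qed.

Lemma mulmx_pad_rc_col m (A : 'M[K]_(m, n.+1)) X p : (A *m pad_rc X) p i = 0.
Proof. by rewrite mxE big1 // => k _; rewrite pad_rc_col mulr0. Qed.

Lemma col'_mulmx_pad_rc m (A : 'M[K]_(m, n.+1)) X :
  col' i (A *m pad_rc X) = col' i A *m X.
Proof.
apply/matrixP => p b; rewrite !mxE (bigD1_ord i) //= pad_rc_row mulr0 add0r.
by apply: eq_bigr => a _; rewrite pad_rc_lift !mxE.
Qed.

Lemma col'_mulmx_zero_col m (B : 'M[K]_(m, n.+1)) (A : 'M[K]_n.+1) :
  (forall p, B p i = 0) -> col' i (B *m A) = col' i B *m row' i (col' i A).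
Proof.
move=> Bi; apply/matrixP => p c; rewrite !mxE (bigD1_ord i) //= Bi mul0r add0r.
by apply: eq_bigr => a _; rewrite !mxE.
Qed.

End PadRowCol.

Lemma map_pad_rc (K L : pzRingType) n i (f : K -> L) (X : 'M[K]_n) :
  f 0 = 0 -> map_mx f (pad_rc i X) = pad_rc i (map_mx f X).
Proof.
move=> f0; apply/matrixP => p q; rewrite !mxE.
by case: (unlift i p) => [a|]; case: (unlift i q) => [b|]; rewrite ?mxE.
Qed.

Section PadEigenvalue.
Variables (K : fieldType) (n : nat) (i : 'I_n.+1) (A : 'M[K]_n.+1) (X : 'M[K]_n).

Lemma eigenvalue_mulmx_pad_rc z : eigenvalue (A *m pad_rc i X) z ->
  z = 0 \/ eigenvalue (row' i (col' i A) *m X) z.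
Proof.
move=> /eigenvalueP[v vAX v0]; have [->|z0] := eqVneq z 0; [by left | right].
have vi : v 0 i = 0.
  have := congr1 (fun w : 'rV_n.+1 => w 0 i) vAX.
  rewrite /= mulmxA mulmx_pad_rc_col mxE => /esym/eqP.
  by rewrite mulf_eq0 (negPf z0) => /eqP.
apply/eigenvalueP; exists (col' i v).
  rewrite mulmxA -col'_mulmx_zero_col => [|p]; last by rewrite (ord1 p).
  rewrite -col'_mulmx_pad_rc -mulmxA vAX.
  by apply/rowP => b; rewrite !mxE.
apply: contra v0 => /eqP cv0; apply/eqP/rowP => p; rewrite mxE.
case: (unliftP i p) => [a ->|->] //.
by have := congr1 (fun w : 'rV_n => w 0 a) cv0; rewrite !mxE.
Qed.

Lemma eigenvalue_mulmx_pad_rc_of_minor z : eigenvalue (row' i (col' i A) *m X) z ->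
  eigenvalue (A *m pad_rc i X) z.
Proof.
move=> /eigenvalueP[w wAX w0].
pose v : 'rV[K]_n.+1 := \row_p oapp (w 0) 0 (unlift i p).
have vi p : v p i = 0 by rewrite mxE unlift_none.
have vw : col' i v = w by apply/rowP => a; rewrite !mxE liftK.
apply/eigenvalueP; exists v; last first.
  by apply: contra w0 => /eqP v0; rewrite -vw v0; apply/eqP/rowP => a; rewrite !mxE.
apply/rowP => q; case: (unliftP i q) => [b ->|->]; last first.
  by rewrite mulmxA mulmx_pad_rc_col !mxE unlift_none mulr0.
transitivity (col' i (v *m A *m pad_rc i X) 0 b); first by rewrite mulmxA [RHS]mxE.
rewrite col'_mulmx_pad_rc col'_mulmx_zero_col // vw -mulmxA wAX.
by rewrite !mxE liftK.
Qed.

End PadEigenvalue.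

Lemma spectral_radius_mulmx_pad_rc (R : realType) n i (A : 'M[R]_n.+1) (X : 'M[R]_n) :
  spectral_radius (A *m pad_rc i X) = spectral_radius (del_rc A i *m X).
Proof.
have cplx_pad : cplx_mx (A *m pad_rc i X) = cplx_mx A *m pad_rc i (cplx_mx X).
  by rewrite /cplx_mx map_mxM map_pad_rc.
have cplx_del : cplx_mx (del_rc A i *m X) = row' i (col' i (cplx_mx A)) *m cplx_mx X.
  by rewrite /cplx_mx map_mxM; congr (_ *m _); apply/matrixP => p q; rewrite !mxE.
apply/le_anti/andP; split; apply: spectral_radius_le (spectral_radius_ge0 _) _ => z.
  rewrite cplx_pad => /eigenvalue_mulmx_pad_rc[->|].
    by rewrite Normc.normc0 spectral_radius_ge0.
  by rewrite -cplx_del; exact: spectral_radius_ub.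
rewrite cplx_del => /eigenvalue_mulmx_pad_rc_of_minor.
by rewrite -cplx_pad; exact: spectral_radius_ub.
Qed.

Section SetDiagEntry.
Variables (R : realType) (n : nat) (V : 'M[R]_n.+1) (i : 'I_n.+1).
Local Notation V_ t := (set_diag_entry V i t).

Lemma cofactor_set_diag_entry t j : cofactor (V_ t) i j = cofactor V i j.
Proof.
rewrite /cofactor; congr (_ * \det _); apply/matrixP => a b.
by rewrite !mxE eq_sym (negPf (neq_lift i a)).
Qed.

Lemma det_set_diag_entry t :
  \det (V_ t) = t * \det (del_rc V i) + \sum_(j | j != i) V i j * cofactor V i j.
Proof.
rewrite (expand_det_row _ i) (bigD1 i) //= cofactor_set_diag_entry mxE !eqxx.
congr (_ * _ + _).
  by rewrite /cofactor addnn -mul2n exprM sqrrN !expr1n mul1r.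
by apply: eq_bigr => j ji; rewrite cofactor_set_diag_entry mxE eqxx (negPf ji).
Qed.

Lemma set_diag_entry_mulmx_pad_rc t X : V_ t *m pad_rc i X = V *m pad_rc i X.
Proof.
apply/matrixP => p q; rewrite !mxE; apply: eq_bigr => k _; rewrite mxE.
by case: (eqVneq k i) => [->|ki]; rewrite ?pad_rc_row ?mulr0 ?andbF.
Qed.

Lemma invmx_set_diag_entry_affine : del_rc V i \in unitmx ->
  exists P, forall t, V_ t \in unitmx ->
    invmx (V_ t) = pad_rc i (invmx (del_rc V i)) + (\det (V_ t))^-1 *: P.
Proof.
move=> Vu; set W := pad_rc i _; set E := 1%:M - V *m W.
have E_lift c q : E (lift i c) q = 0.
  rewrite !mxE; case: (unliftP i q) => [b ->|->]; last first.
    by rewrite eq_sym (negPf (neq_lift i c)) big1 ?subrr // => k _; rewrite pad_rc_col mulr0.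
  have VX := congr1 (fun M : 'M[R]_n => M c b) (mulmxV Vu).
  have VW := congr1 (fun M : 'M[R]_(n.+1, n) => M (lift i c) b)
    (col'_mulmx_pad_rc i V (invmx (del_rc V i))).
  move: VX VW; rewrite !mxE (inj_eq (@lift_inj _ i)) => <- ->; apply/eqP; rewrite subr_eq0.
  by apply/eqP/eq_bigr => a _; rewrite !mxE.
(* Only row i of E is nonzero, so invmx (V_ t) *m E only involves the cofactors
   of row i, which do not depend on t. *)
exists (\matrix_(p, q) (cofactor V i p * E i q)) => t Vtu.
have : invmx (V_ t) - W = invmx (V_ t) *m E.
  by rewrite mulmxBr mulmx1 -(set_diag_entry_mulmx_pad_rc t) mulmxA mulVmx ?mul1mx.
move/eqP; rewrite subr_eq addrC => /eqP ->; congr (_ + _).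
apply/matrixP => p q; rewrite !mxE (bigD1_ord i) //= big1 ?addr0 => [|c _].
  by rewrite /invmx Vtu !mxE cofactor_set_diag_entry -mulrA.
by rewrite E_lift mulr0.
Qed.

End SetDiagEntry.

Lemma cvg_mulmx_invmx_set_diag_entry (R : realType) n (F V : 'M[R]_n.+1) i :
  del_rc V i \in unitmx ->
  F *m invmx (set_diag_entry V i t) @[t --> +oo] -->
    F *m pad_rc i (invmx (del_rc V i)).
Proof.
move=> Vu; have [P invmxE] := invmx_set_diag_entry_affine Vu.
set d := \det (del_rc V i); pose c := \sum_(j | j != i) V i j * cofactor V i j.
have d0 : d != 0 by rewrite -unitfE -unitmxE.
have detE t : \det (set_diag_entry V i t) = d * (t + c / d).
  by rewrite det_set_diag_entry mulrDr mulrCA divff // mulr1 mulrC.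
have pos : \forall t \near +oo, 0 < t + c / d.
  by near do rewrite -ltrBlDr sub0r; apply: nbhs_pinfty_gt; rewrite num_real.
have det_inv : (\det (set_diag_entry V i t))^-1 @[t --> +oo] --> 0.
  under eq_fun do rewrite detE invfM.
  rewrite -(mulr0 d^-1); apply: cvgMl_tmp; apply/gtr0_cvgV0 => //.
  by apply/cvgryPge => A; near do rewrite -lerBlDr; apply: nbhs_pinfty_ge; rewrite num_real.
rewrite -[X in _ --> X]addr0 -(scale0r (F *m P)).
apply: (cvg_trans (near_eq_cvg (f := fun t => F *m pad_rc i (invmx (del_rc V i))
  + (\det (set_diag_entry V i t))^-1 *: (F *m P)) _)).
  near=> t; rewrite invmxE ?mulmxDr ?scalemxAr // unitmxE detE unitfE mulf_neq0 //.
  by rewrite gt_eqF //; near: t.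
exact: cvgD (cvg_cst _) (cvgZr_tmp (a := F *m P) det_inv).
Unshelve. all: by end_near.
Qed.

Theorem corollary2p3 (R : realType) (n : nat) (F V : 'M[R]_n.+1) (i : 'I_n.+1) :
  del_rc V i \in unitmx ->
  spectral_radius (F *m invmx (set_diag_entry V i t))
    @[t --> +oo] --> spectral_radius (del_rc F i *m invmx (del_rc V i)).
Proof.
move=> Vu; rewrite -spectral_radius_mulmx_pad_rc.
apply: continuous_cvg; first exact: spectral_radius_continuous.
exact: cvg_mulmx_invmx_set_diag_entry.
Qed.
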